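(* Let $1<p\le\infty$ and $m\in\mathbb N_0$. Let $\varphi\in C_0^k(\mathbb R)$ with $\operatorname{supp}\varphi\subset[0,1]$, $\varphi>0$ on $(0,1)$, and $k>\frac{mp}{p-1}+1$ (read as $k>m+1$ if $p=\infty$), and assume that $\varphi^{(k)}$ has only finitely many zeros in $[0,1]$. Then for all $0\le n\le m$, $$\frac{|\varphi^{(n)}(t)|}{|\varphi(t)|^{1/p}}\in L_\infty([0,1]).$$
   Context: $C_0^k(\mathbb R)$: compactly supported functions whose derivatives up to order $k$ are uniformly continuous. *)

From HB Require Import structures.
From mathcomp Require Import all_boot all_order all_algebra.
From mathcomp Require Import all_classical all_reals all_analysis.
Set Implicit Arguments. Unset Strict Implicit. Unset Printing Implicit Defensive.
Import Order.TTheory GRing.Theory Num.Theory.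
Import numFieldNormedType.Exports.
Local Open Scope classical_set_scope.
Local Open Scope ring_scope.

Definition nderiv {R : realType} (n : nat) (f : R -> R) : R -> R :=
  derive1n n f.

Definition supp {R : realType} (f : R -> R) : set R :=
  closure [set x | f x != 0].

Definition C0k {R : realType} (k : nat) (f : R -> R) : Prop :=
  compact (supp f) /\
  (forall j : nat, (j < k)%N -> forall x : R, derivable (nderiv j f) x 1) /\
  (forall j : nat, (j <= k)%N -> unif_continuous (nderiv j f)).

Definition inv_exponent {R : realType} (p : \bar R) : R :=
  match p with
  | EFin r => r^-1
  | _ => 0
  end.

Definition k_condition {R : realType} (k m : nat) (p : \bar R) : Prop :=
  match p with
  | EFin r => (m%:R * r / (r - 1) + 1 < k%:R :> R)
  | _ => (m.+1 < k)%N
  end.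

Definition Linfty01 {R : realType} (g : R -> R) : Prop :=
  measurable_fun (`[0%R, 1%R]%classic : set R) g /\
  exists C : R, {ae (@lebesgue_measure R), forall t, (`[0%R, 1%R]%classic : set R) t -> `|g t| <= C}.

From HB Require Import structures.
From mathcomp Require Import all_boot all_order all_algebra.
From mathcomp Require Import all_classical all_reals all_analysis.
Set Implicit Arguments.
Unset Strict Implicit.
Unset Printing Implicit Defensive.
Import Order.TTheory GRing.Theory Num.Theory.
Import numFieldNormedType.Exports.
Local Open Scope classical_set_scope.
Local Open Scope ring_scope.
From mathcomp Require Import ring lra.

(* Near 0 the derivative phi^(k) has no zero on some (0, delta), hence a fixed sign,
   which must be positive because phi > 0 there. All derivatives vanish at 0, so
   integrating makes phi, phi', ..., phi^(k-1) nonnegative and nondecreasing on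
   [0, delta]. For such a tower F j = phi^(j), i.e. (F j)' = F j.+1, put K = k - 1:
   iterating the mean value theorem gives F_i(t - h) (h/K)^i <= F_0(t), Taylor gives
   F_0(t) <= F_K(delta) t^K, and the choice h ~ F_0(t)^(1/K) yields
   F_n(t) <= C F_0(t)^((K-n)/K) <= C' F_0(t)^(1/p); the hypothesis on k says exactly
   (K-n)/K >= 1/p. The endpoint 1 is reduced to 0 by t |-> 1 - t, and on the
   remaining compact interval phi is bounded below. *)

Section RealFacts.
Context {R : realType}.

Lemma is_derive_continuous (f df : R -> R) :
  (forall x : R, is_derive x 1 f (df x)) -> continuous f.
Proof.
move=> fd x; have /derivable1_diffP := @ex_derive _ _ _ _ _ _ _ (fd x).
exact: differentiable_continuous.
Qed.

Lemma MVT_ler (f df : R -> R) (a b L : R) : (forall x : R, is_derive x 1 f (df x)) -> a <= b ->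
  (forall x, a <= x <= b -> df x <= L) -> f b - f a <= L * (b - a).
Proof.
move=> fd ab dfL.
have [c /[!in_itv]/= /dfL cL ->] :=
  MVT_segment ab (fun x _ => fd x) (continuous_subspaceT (is_derive_continuous fd)).
by rewrite ler_wpM2r // subr_ge0.
Qed.

Lemma MVT_ger (f df : R -> R) (a b L : R) : (forall x : R, is_derive x 1 f (df x)) -> a <= b ->
  (forall x, a <= x <= b -> L <= df x) -> L * (b - a) <= f b - f a.
Proof.
move=> fd ab Ldf.
have [c /[!in_itv]/= /Ldf cL ->] :=
  MVT_segment ab (fun x _ => fd x) (continuous_subspaceT (is_derive_continuous fd)).
by rewrite ler_wpM2r // subr_ge0.
Qed.

Lemma powR_le_split (x y a b : R) : 0 < x -> x <= y -> 0 <= a <= b ->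
  x `^ b <= y `^ (b - a) * x `^ a.
Proof.
move=> x0 xy /andP[a0 ab].
rewrite -{1}(subrK a b) (powRD (x := x)); last by rewrite (gt_eqF x0) implybT.
apply: ler_wpM2r; first exact: powR_ge0.
by apply: ge0_ler_powR; rewrite ?nnegrE ?subr_ge0 ?(ltW x0) ?(le_trans (ltW x0) xy).
Qed.

Lemma finite_set_punctured_ball (A : set R) (c : R) : finite_set A ->
  exists2 d, 0 < d & forall x, 0 < `|x - c| < d -> ~ A x.
Proof.
move=> /finite_seqP[s ->]; elim: s => [|y s [d d0 Hd]]; first by exists 1.
have [->|yc] := eqVneq y c.
  exists d => // x xd /=; rewrite in_cons => /orP[/eqP xc|]; last exact: Hd.
  by move: xd; rewrite xc subrr normr0 ltxx.
exists (Num.min d `|y - c|); first by rewrite lt_min d0 normr_gt0 subr_eq0.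
move=> x /andP[x0]; rewrite lt_min => /andP[xd xy] /=.
rewrite in_cons => /orP[/eqP xy'|]; first by move: xy; rewrite xy' ltxx.
by apply: Hd; rewrite x0.
Qed.

Lemma unif_continuous_continuous (f : R -> R) : unif_continuous f -> continuous f.
Proof.
move=> /unif_continuousP fuc x; apply/cvgrPdist_lt => e e0.
have [d d0 Hd] := fuc e e0.
by exists d => //= y xy; apply: (Hd (x, y)).
Qed.

Lemma supp_eq0 (f : R -> R) (A : set R) x : supp f `<=` A -> ~ A x -> f x = 0.
Proof.
move=> fA Ax; apply/eqP; apply: contrapT => fx.
by apply/Ax/fA/subset_closure/negP.
Qed.

Lemma nderiv_is_derive (f : R -> R) j x : derivable (nderiv j f) x 1 ->
  is_derive x 1 (nderiv j f) (nderiv j.+1 f x).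
Proof. by move=> fd; rewrite /nderiv derive1nS derive1E; exact: derivableP. Qed.

Lemma measurable_ratio (D : set R) (f g : R -> R) (a : R) : continuous f -> continuous g ->
  measurable_fun D (fun t => `|f t| / `|g t| `^ a).
Proof.
move=> fc gc; apply: measurable_funTS.
rewrite (_ : (fun t => _) = fun t => `|f t| * `|g t| `^ (- a)); last first.
  by apply/funext => t; rewrite powRN.
have norm_meas (h : R -> R) : continuous h -> measurable_fun [set: R] (fun t => `|h t|).
  move=> hc; apply: measurable_realfun.continuous_measurable_fun => t.
  exact: (continuous_comp (hc t) (@norm_continuous _ R^o (h t))).
apply: measurable_realfun.measurable_funM; first exact: norm_meas.
exact: measurableT_comp (measurable_realfun.measurable_powR _) (norm_meas _ gc).
Qed.

Lemma reflection_continuous (g : R -> R) (c : R) :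
  continuous g -> continuous (fun y : R => c * g (1 - y)).
Proof.
move=> gc x; apply: continuousM; first exact: cst_continuous.
have x1 : {for x, continuous (fun y : R => 1 - y)}.
  by apply: continuousB; [exact: cst_continuous | exact: cvg_id].
exact: continuous_comp x1 (gc (1 - x)).
Qed.

End RealFacts.

Section TowerFromZero.
Context {R : realType}.
Variables (F : nat -> R -> R) (k : nat).
Hypothesis F_deriv : forall j (x : R), (j < k)%N -> is_derive x 1 (F j) (F j.+1 x).
Hypothesis F_at0 : forall j, (j < k)%N -> F j 0 = 0.

Lemma tower_ge0 y : (forall z, 0 <= z <= y -> 0 <= F k z) ->
  forall j, (j <= k)%N -> forall z, 0 <= z <= y -> 0 <= F j z.
Proof.
move=> Fk_ge0 j jk; rewrite -(subKn jk).
elim: (k - j)%N (leq_subr j k) => [|r IH] rk z zy; first by rewrite subn0 Fk_ge0.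
have ik : (k - r.+1 < k)%N by rewrite ltn_subrL (leq_trans _ rk).
have := MVT_ger (L := 0) (fun x => F_deriv x ik) (proj1 (andP zy)).
rewrite mul0r F_at0 // subr0 subnSK //; apply=> w /andP[w0 wz].
by apply: IH; [exact: ltnW | rewrite w0 (le_trans wz) ?(proj2 (andP zy))].
Qed.

Lemma tower_nondecreasing y : (forall z, 0 <= z <= y -> 0 <= F k z) ->
  forall j x z, (j < k)%N -> 0 <= x -> x <= z -> z <= y -> F j x <= F j z.
Proof.
move=> Fk_ge0 j x z jk x0 xz zy.
have := MVT_ger (L := 0) (fun x => F_deriv x jk) xz.
rewrite mul0r subr_ge0; apply=> w /andP[xw wz].
by apply: (tower_ge0 Fk_ge0 jk); rewrite (le_trans x0 xw) (le_trans wz zy).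
Qed.

End TowerFromZero.

Lemma tower_le0 {R : realType} (F : nat -> R -> R) (k : nat) (y : R) :
  (forall j (x : R), (j < k)%N -> is_derive x 1 (F j) (F j.+1 x)) ->
  (forall j, (j < k)%N -> F j 0 = 0) ->
  (forall z, 0 <= z <= y -> F k z <= 0) ->
  forall j, (j <= k)%N -> forall z, 0 <= z <= y -> F j z <= 0.
Proof.
move=> Fd F0 Fk_le0 j jk z zy; rewrite -oppr_ge0.
apply: (@tower_ge0 R (fun j x => - F j x) k _ _ y _ j jk z zy).
- by move=> i x ik; exact: is_deriveN (Fd i x ik).
- by move=> i ik; rewrite F0 ?oppr0.
- by move=> w wy; rewrite oppr_ge0 Fk_le0.
Qed.

Section TowerEstimates.
Context {R : realType}.
Variables (F : nat -> R -> R) (K : nat) (d : R).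
Hypothesis F_deriv : forall j (x : R), (j < K)%N -> is_derive x 1 (F j) (F j.+1 x).
Hypothesis F_ge0 : forall j x, (j <= K)%N -> 0 <= x <= d -> 0 <= F j x.
Hypothesis F_nondecreasing :
  forall j x y, (j <= K)%N -> 0 <= x -> x <= y -> y <= d -> F j x <= F j y.
Hypothesis F_at0 : forall j, (j <= K)%N -> F j 0 = 0.

(* Each derivative is traded for a factor [e]: [F j.+1 y * e <= F j (y + e)] by the mean
   value theorem, since [F j.+1] is nondecreasing and [F j] nonnegative. *)
Lemma tower_lower_bound j : (j <= K)%N -> forall y e, 0 <= y -> 0 < e ->
  y + j%:R * e <= d -> F j y * e ^+ j <= F 0 (y + j%:R * e).
Proof.
elim: j => [|j IH] jK y e y0 e0 yd; first by rewrite mul0r addr0 expr0 mulr1.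
have shift : y + e + j%:R * e = y + j.+1%:R * e by rewrite -addn1 natrD; ring.
have step : F j.+1 y * e <= F j (y + e) - F j y.
  have ye : y <= y + e by rewrite lerDl ltW.
  have := MVT_ger (L := F j.+1 y) (fun x => F_deriv x jK) ye.
  rewrite addrAC subrr add0r; apply=> x /andP[yx xe]; apply: F_nondecreasing => //.
  have : e <= j.+1%:R * e by rewrite -addn1 natrD mulrDl mul1r lerDr mulr_ge0 // ltW.
  by move: xe yd; lra.
have Fjy : 0 <= F j y.
  apply: F_ge0; first exact: ltnW.
  by rewrite y0 (le_trans _ yd) // lerDl mulr_ge0 // ltW.
rewrite -shift; apply: le_trans (IH (ltnW jK) _ _ _ e0 _); last 2 first.
- by rewrite addr_ge0 // ltW.
- by rewrite shift.
rewrite exprS mulrA; apply: ler_wpM2r; first by rewrite exprn_ge0 // ltW.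
by move: step Fjy; lra.
Qed.

Lemma tower_Taylor_bound r : (r <= K)%N ->
  forall x, 0 <= x <= d -> F (K - r) x <= F K d * x ^+ r.
Proof.
elim: r => [|r IH] rK x /andP[x0 xd].
  by rewrite subn0 expr0 mulr1; apply: F_nondecreasing.
have iK : (K - r.+1 < K)%N by rewrite ltn_subrL (leq_trans _ rK).
have := MVT_ler (L := F K d * x ^+ r) (fun x => F_deriv x iK) x0.
rewrite F_at0 ?(ltnW iK) // !subr0 subnSK // -mulrA -exprSr; apply.
move=> z /andP[z0 zx]; apply: le_trans (IH (ltnW rK) z _) _.
  by rewrite z0 (le_trans zx).
apply: ler_wpM2l; first by apply: F_ge0 => //; rewrite (le_trans x0 xd) lexx.
by apply: lerXn2r; rewrite ?nnegrE // (le_trans z0).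
Qed.

Hypothesis K_gt0 : (0 < K)%N.

Lemma tower_le_inv_pow i : (i <= K)%N -> forall t h, 0 < h -> h <= t -> t <= d ->
  F i (t - h) <= K%:R ^+ K * F 0 t * h^-1 ^+ i.
Proof.
move=> iK t h h0 ht td.
have KR : 0 < K%:R :> R by rewrite ltr0n.
have e0 : 0 < h / K%:R by rewrite divr_gt0.
have ie : i%:R * (h / K%:R) <= h.
  rewrite mulrA ler_pdivrMr // mulrC.
  by apply: ler_wpM2l; [exact: ltW | rewrite ler_nat].
have ie0 : 0 <= i%:R * (h / K%:R) by rewrite mulr_ge0 // ltW.
have low : F i (t - h) * (h / K%:R) ^+ i <= F 0 t.
  apply: le_trans (tower_lower_bound iK _ e0 _) _; [lra | lra |].
  by apply: F_nondecreasing => //; lra.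
rewrite -ler_pdivlMr ?exprn_gt0 // in low; apply: le_trans low _.
rewrite -exprVn invf_div exprMn mulrC mulrAC.
apply: ler_wpM2r; first by rewrite exprn_ge0 // invr_ge0 ltW.
apply: ler_wpM2r; first by apply: F_ge0 => //; lra.
by rewrite ler_weXn2l // ler1n.
Qed.

(* [F (K - r.+1)] at [x] is its value at [t - h], bounded by [tower_le_inv_pow],
   plus [h] times the bound on its derivative over [t - h, t] given by induction. *)
Lemma tower_upper_bound r : (r <= K)%N -> forall t h x, 0 < h -> h <= t -> t <= d ->
  t - h <= x <= t ->
  F (K - r) x <= r%:R * (K%:R ^+ K * F 0 t * h^-1 ^+ (K - r)) + F K d * h ^+ r.
Proof.
elim: r => [|r IH] rK t h x h0 ht td /andP[hx xt].
  rewrite subn0 mul0r add0r expr0 mulr1; apply: F_nondecreasing => //; last lra.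
  by apply: le_trans hx; rewrite subr_ge0.
have iK : (K - r.+1 < K)%N by rewrite ltn_subrL (leq_trans _ rK).
set i := (K - r.+1)%N in iK *.
set P := K%:R ^+ K * F 0 t.
have P0 : 0 <= P by rewrite mulr_ge0 ?exprn_ge0 // F_ge0 //; lra.
have M0 : 0 <= F K d by apply: F_ge0 => //; lra.
set L := r%:R * (P * h^-1 ^+ (K - r)) + F K d * h ^+ r.
have L0 : 0 <= L.
  have hV : 0 <= h^-1 ^+ (K - r) by rewrite exprn_ge0 // invr_ge0 ltW.
  have hr : 0 <= h ^+ r by rewrite exprn_ge0 // ltW.
  by apply: addr_ge0; apply: mulr_ge0 => //; exact: mulr_ge0.
have incr : F i x - F i (t - h) <= L * h.
  apply: le_trans (_ : L * (x - (t - h)) <= _); last by rewrite ler_wpM2l //; lra.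
  apply: (MVT_ler (L := L) (fun x => F_deriv x iK) hx) => z /andP[z1 z2].
  by rewrite subnSK //; apply: IH => //; [exact: ltnW | rewrite z1 (le_trans z2)].
have Fi := tower_le_inv_pow (ltnW iK) h0 ht td.
have hK : h^-1 ^+ (K - r) * h = h^-1 ^+ i by rewrite /i -(subnSK rK) exprSr divfK ?gt_eqF.
have LhE : L * h = r%:R * (P * h^-1 ^+ i) + F K d * h ^+ r.+1.
  by rewrite /L mulrDl exprSr -!mulrA hK.
rewrite -[r.+1]addn1 natrD addn1; move: incr Fi; rewrite LhE -/P; lra.
Qed.

Lemma tower_le_powR n : (n < K)%N -> exists C, forall t, 0 < t <= d -> 0 < F 0 t ->
  F n t <= C * F 0 t `^ ((K - n)%:R / K%:R).
Proof.
move=> nK; set M := F K d; set mu := M + 1.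
exists ((K - n)%:R * (K%:R ^+ K * mu ^+ n) + M) => t /andP[t0 td] F0t.
have M0 : 0 <= M by apply: F_ge0 => //; lra.
have mu1 : 1 <= mu by rewrite lerDr.
have mu0 : 0 < mu by lra.
(* The scale [h] balances the two terms of [tower_upper_bound]; Taylor gives [h <= t]. *)
set u := F 0 t `^ K%:R^-1.
have u0 : 0 < u by apply: powR_gt0.
have uK : u ^+ K = F 0 t.
  by rewrite -powR_mulrn ?powR_ge0 // -powRrM mulVf ?powRr1 ?(ltW F0t) // pnatr_eq0 -lt0n.
have uKn : u ^+ (K - n) = F 0 t `^ ((K - n)%:R / K%:R).
  by rewrite -powR_mulrn ?powR_ge0 // -powRrM mulrC.
set h := u / mu.
have h0 : 0 < h by apply: divr_gt0.
have hu : h <= u by rewrite ler_pdivrMr // ler_peMr // ltW.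
have ht : h <= t.
  have Ft : F 0 t <= M * t ^+ K.
    by have := tower_Taylor_bound (leqnn K) (x := t); rewrite subnn; apply; rewrite (ltW t0).
  have muK : M <= mu ^+ K.
    by apply: le_trans (_ : mu <= _); [rewrite lerDl | rewrite -{1}(expr1 mu) ler_weXn2l].
  rewrite -(ler_pXn2r K_gt0) ?nnegrE ?(ltW h0) ?(ltW t0) // /h exprMn uK exprVn.
  rewrite ler_pdivrMr ?exprn_gt0 // mulrC; apply: le_trans Ft _.
  by rewrite ler_wpM2r // exprn_ge0 // ltW.
have tt : t - h <= t <= t by rewrite lexx andbT lerBlDr lerDl (ltW h0).
have := tower_upper_bound (leq_subr n K) h0 ht td tt.
rewrite subKn ?(ltnW nK) // => Fn.
apply: le_trans Fn _.
have F0h : F 0 t * h^-1 ^+ n = mu ^+ n * u ^+ (K - n).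
  rewrite -uK /h invf_div exprMn exprVn -{1}(subnK (ltnW nK)) exprD.
  by rewrite mulrAC -mulrA divfK 1?mulrC // expf_neq0 // gt_eqF.
have hKn : h ^+ (K - n) <= u ^+ (K - n) by rewrite lerXn2r ?nnegrE ?(ltW h0) ?(ltW u0).
by rewrite -mulrA F0h -uKn mulrDl -!mulrA lerD2l ler_wpM2l.
Qed.

End TowerEstimates.

Section VanishingTower.
Context {R : realType}.
Variables (F : nat -> R -> R) (k : nat).
Hypothesis F_deriv : forall j (x : R), (j < k)%N -> is_derive x 1 (F j) (F j.+1 x).
Hypothesis Fk_cont : continuous (F k).
Hypothesis F0_neg : forall x, x < 0 -> F 0 x = 0.

Lemma tower_eq0_neg j : (j <= k)%N -> forall x, x < 0 -> F j x = 0.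
Proof.
elim: j => [_|j IH jk] x x0; first exact: F0_neg.
have Fj0 : \near x, F j x = cst 0 x.
  by near=> y; apply: IH; [exact: ltnW | near: y; exact: lt_nbhsl].
have := @derive_val _ _ _ _ _ _ _ (near_eq_is_derive Fj0 (F_deriv x jk)).
by rewrite derive_cst.
Unshelve. all: by end_near.
Qed.

Lemma tower_continuous j : (j <= k)%N -> continuous (F j).
Proof.
rewrite leq_eqVlt => /orP[/eqP->//|jk].
exact: is_derive_continuous (fun x => F_deriv x jk).
Qed.

Lemma tower_eq0_at0 j : (j <= k)%N -> F j 0 = 0.
Proof.
move=> jk.
have Fj_left : F j y @[y --> (0 : R)^'-] --> F j 0.
  exact/cvg_at_left_filter/tower_continuous.
have Fj_left0 : F j y @[y --> (0 : R)^'-] --> (0 : R).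
  apply: cvg_trans (near_eq_cvg _) (cvg_cst (0 : R)).
  by apply: filterS (nbhs_left_lt (0 : R)) => y y0; rewrite tower_eq0_neg.
exact: cvg_unique Fj_left Fj_left0.
Qed.

Hypothesis F0_pos : forall x, 0 < x < 1 -> 0 < F 0 x.

(* A zero-free [F k] has a constant sign on (0, d0); a negative sign would
   propagate down the tower and make [F 0] nonpositive there. *)
Lemma top_ge0_near0 d0 : d0 <= 1 -> (forall x, 0 < x < d0 -> F k x != 0) ->
  forall z, 0 <= z < d0 -> 0 <= F k z.
Proof.
move=> d01 Fk_neq0 z /andP[z0 zd]; rewrite leNgt; apply/negP => Fz.
have F_at0 j : (j < k)%N -> F j 0 = 0 by move=> jk; apply/tower_eq0_at0/ltnW.
have z_gt0 : 0 < z.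
  by rewrite lt_neqAle z0 andbT; apply: contraTneq Fz => <-; rewrite tower_eq0_at0 ?ltxx.
have Fk_le0 w : 0 <= w <= z -> F k w <= 0.
  move=> /andP[w0 wz]; rewrite leNgt; apply/negP => Fw.
  have Fkw : Num.min (F k w) (F k z) <= 0 <= Num.max (F k w) (F k z).
    by rewrite ge_min le_max (ltW Fz) (ltW Fw) orbT.
  have [c /[!in_itv]/= /andP[wc cz] /eqP] := IVT wz (continuous_subspaceT Fk_cont) Fkw.
  apply/negP/Fk_neq0; rewrite (le_lt_trans cz zd) andbT.
  apply: lt_le_trans wc; rewrite lt_neqAle w0 andbT.
  by apply: contraTneq Fw => <-; rewrite tower_eq0_at0 ?ltxx.
have := tower_le0 F_deriv F_at0 Fk_le0 (leq0n k) (z := z).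
by rewrite z0 lexx => /(_ isT); rewrite leNgt F0_pos // z_gt0 (lt_le_trans zd d01).
Qed.

(* The estimates are run on the first [k - 1] derivatives: the sign of [F k] is what
   makes [F k.-1] nondecreasing. *)
Lemma tower_bound_of_top_ge0 d n a : (forall z, 0 <= z <= d -> 0 <= F k z) ->
  (n.+1 < k)%N -> 0 <= a -> a * (k.-1)%:R <= (k.-1 - n)%:R ->
  exists C, forall t, 0 < t <= d -> 0 < F 0 t -> `|F n t| <= C * F 0 t `^ a.
Proof.
move=> Fk_ge0 nk a0 aK.
have k0 : (0 < k)%N by apply: leq_trans nk.
have kK : (k.-1 < k)%N by rewrite ltn_predL.
have F_at0 j : (j < k)%N -> F j 0 = 0 by move=> jk; apply/tower_eq0_at0/ltnW.
have F_deriv' j (x : R) : (j < k.-1)%N -> is_derive x 1 (F j) (F j.+1 x).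
  by move=> jk; apply/F_deriv/(ltn_trans jk kK).
have F_ge0 j x : (j <= k.-1)%N -> 0 <= x <= d -> 0 <= F j x.
  by move=> jk; apply: (tower_ge0 F_deriv F_at0 Fk_ge0); exact: leq_trans jk (ltnW kK).
have F_nondecr j x y : (j <= k.-1)%N -> 0 <= x -> x <= y -> y <= d -> F j x <= F j y.
  by move=> jk; apply: (tower_nondecreasing F_deriv F_at0 Fk_ge0); exact: leq_ltn_trans jk kK.
have F_at0' j : (j <= k.-1)%N -> F j 0 = 0 by move=> jk; apply/F_at0/(leq_ltn_trans jk kK).
have K_gt0 : (0 < k.-1)%N by rewrite -ltnS prednK // (leq_ltn_trans _ nk).
have nK : (n < k.-1)%N by rewrite -ltnS prednK.
have [C HC] := tower_le_powR F_deriv' F_ge0 F_nondecr F_at0' K_gt0 nK.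
exists (`|C| * F 0 d `^ ((k.-1 - n)%:R / (k.-1)%:R - a)) => t /andP[t0 td] F0t.
rewrite ger0_norm; last by apply: F_ge0; rewrite ?(ltnW nK) // (ltW t0).
apply: le_trans (HC t _ F0t) _; first by rewrite t0.
rewrite -mulrA; apply: le_trans (ler_wpM2r (powR_ge0 _ _) (ler_norm C)) _.
apply: ler_wpM2l; first exact: normr_ge0.
apply: powR_le_split => //; first by apply: F_nondecr => //; exact: ltW.
by rewrite a0 /= ler_pdivlMr // ltr0n.
Qed.

Lemma tower_endpoint_bound n a : (n.+1 < k)%N -> 0 <= a ->
  a * (k.-1)%:R <= (k.-1 - n)%:R ->
  finite_set [set t | (`[0, 1]%classic : set R) t /\ F k t = 0] ->
  exists2 d, 0 < d <= 2^-1 &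
    exists C, forall t, 0 < t <= d -> `|F n t| <= C * F 0 t `^ a.
Proof.
move=> nk a0 aK Fk_zeros.
have [e e0 Fk_zeros0] := finite_set_punctured_ball 0 Fk_zeros.
set d0 := Num.min e 1; set d := d0 / 2.
have d00 : 0 < d0 by rewrite lt_min e0 ltr01.
have d01 : d0 <= 1 by rewrite ge_min lexx orbT.
have d0e : d0 <= e by rewrite ge_min lexx.
have Fk_ge0 z : 0 <= z <= d -> 0 <= F k z.
  move=> /andP[z0 zd]; apply: (top_ge0_near0 d01); last by rewrite z0 /=; rewrite /d in zd; lra.
  move=> x /andP[x0 xd]; apply/eqP => Fkx; apply: (Fk_zeros0 x); last first.
    by split=> //=; rewrite in_itv/= !ltW //; lra.
  by rewrite subr0 gtr0_norm // x0 (lt_le_trans xd d0e).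
have [C HC] := tower_bound_of_top_ge0 Fk_ge0 nk a0 aK.
exists d; first by apply/andP; split; rewrite /d; lra.
exists C => t /andP[t0 td]; apply: HC; first by rewrite t0.
by apply: F0_pos; rewrite t0 /=; rewrite /d in td; lra.
Qed.

End VanishingTower.

Lemma tower_endpoint_bound_right {R : realType} (F : nat -> R -> R) k n a :
  (forall j (x : R), (j < k)%N -> is_derive x 1 (F j) (F j.+1 x)) ->
  continuous (F k) -> (forall x, 1 < x -> F 0 x = 0) ->
  (forall x, 0 < x < 1 -> 0 < F 0 x) ->
  (n.+1 < k)%N -> 0 <= a -> a * (k.-1)%:R <= (k.-1 - n)%:R ->
  finite_set [set t | (`[0, 1]%classic : set R) t /\ F k t = 0] ->
  exists2 d, 0 < d <= 2^-1 &
    exists C, forall t, 1 - d <= t < 1 -> `|F n t| <= C * F 0 t `^ a.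
Proof.
move=> F_deriv Fk_cont F0_gt1 F0_pos nk a0 aK Fk_zeros.
pose G j y := (-1) ^+ j * F j (1 - y).
have G_deriv j (x : R) : (j < k)%N -> is_derive x 1 (G j) (G j.+1 x).
  move=> jk; have d1 : is_derive x 1 (fun y : R => 1 - y) (-1).
    have d1 : is_derive x 1 (fun y : R => 1 - y) (0 - 1) by apply: is_deriveB.
    by rewrite sub0r in d1.
  have := is_deriveZ ((-1) ^+ j) (is_derive1_comp (g := fun y => 1 - y) (F_deriv _ (1 - x) jk) d1).
  move/is_derive_eq; apply.
  by rewrite /G exprS mulN1r mulrN1 scalerN mulNr.
have Gk_cont : continuous (G k) by exact: reflection_continuous.
have G0 y : G 0%N y = F 0 (1 - y) by rewrite /G expr0 mul1r.
have G0_neg x : x < 0 -> G 0%N x = 0 by move=> x0; rewrite G0 F0_gt1 //; lra.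
have G0_pos x : 0 < x < 1 -> 0 < G 0%N x.
  by move=> /andP[x0 x1]; rewrite G0 F0_pos //; apply/andP; split; lra.
have Gk_zeros : finite_set [set t | (`[0, 1]%classic : set R) t /\ G k t = 0].
  apply: sub_finite_set (finite_image (fun t => 1 - t) Fk_zeros) => t [].
  rewrite /= in_itv/= => /andP[t0 t1] /eqP; rewrite /G mulf_eq0 signr_eq0 /= => /eqP Fk1t.
  exists (1 - t); last by rewrite subKr.
  by split=> //; rewrite /= in_itv/=; apply/andP; split; lra.
have [d d_bnd [C HC]] := tower_endpoint_bound G_deriv Gk_cont G0_neg G0_pos nk a0 aK Gk_zeros.
exists d => //; exists C => t /andP[td t1].
have := HC (1 - t); rewrite G0 /G normrM normrX normrN1 expr1n mul1r subKr.
by apply; apply/andP; split; lra.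
Qed.

Lemma ratio_bounded01 {R : realType} (f g : R -> R) (a d1 d2 C1 C2 : R) :
  0 <= a -> continuous f -> continuous g -> (forall t, 0 < t < 1 -> 0 < g t) ->
  0 < d1 -> 0 < d2 -> d1 <= 1 - d2 ->
  (forall t, 0 < t <= d1 -> `|f t| <= C1 * g t `^ a) ->
  (forall t, 1 - d2 <= t < 1 -> `|f t| <= C2 * g t `^ a) ->
  exists C, forall t, 0 <= t <= 1 -> `|f t| / `|g t| `^ a <= C.
Proof.
move=> a0 fc gc g_pos d10 d20 d12 f_left f_right.
pose r t := `|f t| / `|g t| `^ a.
have r_ge0 t : 0 <= r t by rewrite divr_ge0 ?powR_ge0.
have r_le t K : 0 < t < 1 -> `|f t| <= K * g t `^ a -> r t <= K.
  by move=> t01 ft; rewrite /r (gtr0_norm (g_pos _ t01)) ler_pdivrMr // powR_gt0 // g_pos.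
have r_le_norm t K : 0 < t < 1 -> `|f t| <= K * g t `^ a -> r t <= `|K|.
  move=> t01 ft; apply: r_le => //; apply: le_trans ft _.
  by rewrite ler_wpM2r ?powR_ge0 ?ler_norm.
have normf_cont : continuous (fun t => `|f t|).
  by move=> x; apply: (continuous_comp (fc x) (@norm_continuous _ R^o (f x))).
have [c /[!in_itv]/= /andP[c1 c2] gc_min] := EVT_min d12 (continuous_subspaceT gc).
have [m _ fm_max] := EVT_max d12 (continuous_subspaceT normf_cont).
have gc0 : 0 < g c by apply: g_pos; apply/andP; split; lra.
set B := `|f m| / g c `^ a.
have B0 : 0 <= B by rewrite divr_ge0 ?powR_ge0.
(* The endpoints are bounded by their own values, so nothing is assumed of [g 0], [g 1]. *)
exists (`|C1| + `|C2| + B + r 0 + r 1) => t /andP[t0 t1]; rewrite -/(r t).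
have r0 := r_ge0 0; have r1 := r_ge0 1; have rt := r_ge0 t.
have nC1 := normr_ge0 C1; have nC2 := normr_ge0 C2.
have [->|t0'] := eqVneq t 0; first lra.
have [->|t1'] := eqVneq t 1; first lra.
have t01 : 0 < t < 1 by rewrite !lt_neqAle eq_sym t0' t0 t1' t1.
have [td1|td1] := leP t d1.
  by have := r_le_norm _ _ t01 (f_left t _); rewrite td1 andbT => /(_ (proj1 (andP t01))); lra.
have [td2|td2] := leP (1 - d2) t.
  by have := r_le_norm _ _ t01 (f_right t _); rewrite td2 => /(_ (proj2 (andP t01))); lra.
suff : r t <= B by lra.
have tI : t \in `[d1, 1 - d2] by rewrite in_itv/= !ltW.
apply: r_le => //; apply: le_trans (fm_max _ tI) _.
rewrite /B mulrAC ler_pdivlMr ?powR_gt0 //; apply: ler_wpM2l => //.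
have gt_ge0 : 0 <= g t by exact/ltW/g_pos.
by apply: ge0_ler_powR; rewrite ?nnegrE ?gc_min // ltW.
Qed.

Lemma k_condition_exponent (R : realType) (p : \bar R) (m k n : nat) :
  (1 < p)%E -> k_condition k m p -> (n <= m)%N ->
  [/\ (n.+1 < k)%N, 0 <= inv_exponent p & inv_exponent p * (k.-1)%:R <= (k.-1 - n)%:R].
Proof.
case: p => [r| |] //= r1 hk nm; last first.
  by rewrite mul0r ler0n; split => //; apply: leq_ltn_trans hk; rewrite ltnS.
rewrite lte_fin in r1.
have r10 : 0 < r - 1 by lra.
have nm' : n%:R <= m%:R :> R by rewrite ler_nat.
have mk : m%:R * r < (k%:R - 1) * (r - 1) by rewrite -ltr_pdivrMr //; lra.
have nk : (n.+1 < k)%N.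
  rewrite -(ltr_nat R) -addn1 natrD.
  suff : m%:R <= m%:R * r / (r - 1) :> R by lra.
  by rewrite ler_pdivlMr // mulrBr mulr1 gerBl.
have k0 : (0 < k)%N by apply: leq_trans nk.
have nk' : (n <= k.-1)%N by rewrite -ltnS prednK // ltnW.
split => //; first by rewrite invr_ge0; lra.
have r0 : 0 < r by lra.
have kR : (k.-1)%:R = k%:R - 1 :> R by rewrite -subn1 natrB.
rewrite natrB // kR -[X in _ <= X](mulKf (lt0r_neq0 r0)) ler_pM2l ?invr_gt0 //.
nra.
Qed.

Theorem lemma4p5 (R : realType) (p : \bar R) (m k : nat) (phi : R -> R) :
  (1 < p)%E ->
  C0k k phi ->
  supp phi `<=` (`[0, 1]%classic : set R) ->
  (forall t, 0 < t < 1 -> 0 < phi t) ->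
  k_condition k m p ->
  finite_set [set t | (`[0, 1]%classic : set R) t /\ nderiv k phi t = 0] ->
  forall n : nat, (n <= m)%N ->
    Linfty01 (fun t => `|nderiv n phi t| / (`|phi t| `^ inv_exponent p)).
Proof.
move=> p1 [_ [phi_deriv phi_uc]] phi_supp phi_pos hk phi_zeros n nm.
have [nk a0 aK] := k_condition_exponent p1 hk nm.
have F_deriv j (x : R) : (j < k)%N -> is_derive x 1 (nderiv j phi) (nderiv j.+1 phi x).
  by move=> jk; apply/nderiv_is_derive/phi_deriv.
have F_cont j : (j <= k)%N -> continuous (nderiv j phi).
  by move=> jk; apply/unif_continuous_continuous/phi_uc.
have phi_lt0 x : x < 0 -> phi x = 0.
  by move=> x0; apply: (supp_eq0 phi_supp); rewrite /= in_itv/=; lra.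
have phi_gt1 x : 1 < x -> phi x = 0.
  by move=> x1; apply: (supp_eq0 phi_supp); rewrite /= in_itv/=; lra.
have [d1 /andP[d10 d1h] [C1 HC1]] :=
  tower_endpoint_bound F_deriv (F_cont k (leqnn k)) phi_lt0 phi_pos nk a0 aK phi_zeros.
have [d2 /andP[d20 d2h] [C2 HC2]] :=
  tower_endpoint_bound_right F_deriv (F_cont k (leqnn k)) phi_gt1 phi_pos nk a0 aK phi_zeros.
have nk' : (n <= k)%N by rewrite ltnW // ltnW.
have d12 : d1 <= 1 - d2 by lra.
have [C HC] := ratio_bounded01 a0 (F_cont n nk') (F_cont 0%N (leq0n k)) phi_pos d10 d20 d12 HC1 HC2.
split; first exact: measurable_ratio (F_cont n nk') (F_cont 0%N (leq0n k)).
exists C; apply: aeW => t /=; rewrite in_itv/= => /HC ratio_le.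
by rewrite ger0_norm // divr_ge0 // powR_ge0.
Qed.
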